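(* Consider the combined heat and power network described in the context, operating in Mode 2. Then, at equilibrium, the power contributions $p^G=(p^G_j)_{j\in N_e^G}$ of the electric generators and $h^G=(h^G_j)_{j\in E_h^G}$ of the conventional heat sources (together with $p^U=(D_j\omega_j)_{j\in N_e}$) are a solution of the combined heat and power optimization problem $$\min_{p^G,h^G,p^U}\ \tfrac12(p^G)^TQ_ep^G+\tfrac12(h^G)^T\tfrac{m}{C_o}Q_hh^G+\tfrac12(p^U)^TQ_up^U$$ subject to $$\mathbf 1^Tp^G=\mathbf 1^Tp^L+\mathbf 1^Tp^P+\mathbf 1^Tp^U,\qquad \mathbf 1^Th^G=\mathbf 1^Th^L-\mathbf 1^Th^P,\qquad h^P_{j_k}=C_op^P_{i_k},\ k\in H,$$ where $Q_e=\mathrm{diag}(Q_{e,jj})$, $Q_h=\mathrm{diag}(Q_{h,jj})$, $Q_u=\mathrm{diag}(1/D_j)_{j\in N_e}$.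
   Context: Power network: a directed graph $(N_e,E_e)$ with buses $N_e$ and lines $E_e$, arbitrarily oriented. $N_e^G\subseteq N_e$ is the set of generator buses and $H_e\subseteq N_e$ the set of (heat-pump converter) buses to which heat pumps are connected. Heat network: a directed graph $(N_h,E_h)$, each edge $j$ oriented along its mass flow with inlet node $s(j)$ and outlet node $t(j)$; among the edges are heat-pump edges $H_h$, conventional heat source edges $E_h^G$ and heat-load edges $E_h^L$. Heat pumps are indexed by a finite set $H$; heat pump $k\in H$ is connected to bus $i_k\in H_e$ and corresponds to edge $j_k\in H_h$. Lines: for $(i,j)\in E_e$, $\dot\eta_{ij}=\omega_i-\omega_j$, $p_{ij}=B_{ij}\sin(\eta_{ij})-p^{\mathrm{nom}}_{ij}$, $B_{ij}>0$. Buses $j\in N_e\setminus H_e$: $M_j\dot\omega_j=-p^L_j+p^G_j-p^U_j+\sum_{i:(i,j)\in E_e}p_{ij}-\sum_{k:(j,k)\in E_e}p_{jk}$, with $M_j>0$, $p^U_j=D_j\omega_j$, $D_j>0$, $p^L_j$ constant (step load change), $p^G_j=0$ for $j\notin N_e^G$. Heat-pump buses $j\in H_e$ (Mode 2): zero inertia, $0=-p^P_j+\sum_{i:(i,j)\in E_e}p_{ij}-\sum_{k:(j,k)\in E_e}p_{jk}$ and $\omega_j=m\bar T$, where $p^P_j$ is the heat pump electric power and $m$ a scalar constant. Heat network ($\rho C_p=1$), constant positive mass flows $q^E_j$, volumes $V^E_j,V^N_k>0$: $V^E_j\dot T^E_j=q^E_j(T^N_{s(j)}-T^E_j)+h^G_j+h^P_j-h^L_j$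 for each edge $j$, $V^N_k\dot T^N_k=\sum_{j:t(j)=k}q^E_j(T^E_j-T^N_k)$ for each node $k$, where $h^G_j=0$ unless $j\in E_h^G$, $h^P_j=0$ unless $j\in H_h$, $h^L_j=0$ unless $j\in E_h^L$, $h^L_j$ constant. In matrix form $V\dot T=-A_hT+\mathrm{col}(h^G+h^P-h^L,\mathbf 0)$ with $T=\mathrm{col}(T^E,T^N)$, $V=\mathrm{diag}(V^E,V^N)$, where $A_h\mathbf 1=0$, $\mathbf 1^TA_h=0$ and $A_h+A_h^T$ is positive semidefinite with a simple zero eigenvalue. Average temperature $\bar T=\mathbf 1^TVT/(\mathbf 1^TV\mathbf 1)$. Generation control: $\dot p^G_j=-p^G_j-\frac{1}{Q_{e,jj}}\omega_j$ ($j\in N_e^G$), $\dot h^G_j=-h^G_j-\frac{1}{Q_{h,jj}}\bar T$ ($j\in E_h^G$), with $Q_{e,jj},Q_{h,jj}>0$. Heat pump: $h^P_{j_k}=C_op^P_{i_k}$, $k\in H$, with constant coefficient of performance $C_o$. *)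

From HB Require Import structures.
From mathcomp Require Import all_boot all_order all_algebra.
From mathcomp Require Import all_classical all_reals all_analysis.
Set Implicit Arguments. Unset Strict Implicit. Unset Printing Implicit Defensive.
Import Order.TTheory GRing.Theory Num.Theory.
Local Open Scope ring_scope.

Section CHP.
Variable R : realType.

(* buses Ne, lines Ee with (arbitrary) orientation src l -> dst l *)
Variables (Ne Ee : finType) (src dst : Ee -> Ne).

Definition padj : rel Ne :=
  fun x y => [exists l, ((src l == x) && (dst l == y)) || ((src l == y) && (dst l == x))].

Definition power_connected : Prop := forall a b : Ne, connect padj a b.

Variables (H : finType) (iH : H -> Ne).
Definition isHP (j : Ne) : bool := [exists k, iH k == j].

Definition pline (B pnom eta : Ee -> R) (l : Ee) : R := B l * sin (eta l) - pnom l.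

Definition netin (B pnom eta : Ee -> R) (j : Ne) : R :=
  \sum_(l | dst l == j) pline B pnom eta l - \sum_(l | src l == j) pline B pnom eta l.

Variables (Nh Eh : finType) (s t : Eh -> Nh) (q : Eh -> R) (jH : H -> Eh).

(* A_h such that  V dT/dt = -A_h T + col(h^G + h^P - h^L, 0),  T = col(T^E, T^N) *)
Definition Ah (a b : Eh + Nh) : R :=
  match a, b with
  | inl j, inl j' => if j == j' then q j else 0
  | inl j, inr n  => if s j == n then - q j else 0
  | inr k, inl j  => if t j == k then - q j else 0
  | inr k, inr k' => if k == k' then \sum_(j | t j == k) q j else 0
  end.

Definition hPedge (Co : R) (pP : H -> R) (j : Eh) : R :=
  \sum_(k | jH k == j) Co * pP k.

Definition Tbar (VE : Eh -> R) (VN : Nh -> R) (TE : Eh -> R) (TN : Nh -> R) : R :=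
  (\sum_j VE j * TE j + \sum_n VN n * TN n) / (\sum_j VE j + \sum_n VN n).

(* (all time derivatives vanish; inertias/volumes are positive so this is
   equivalent to the right-hand sides being zero) *)
Definition equilibrium
  (B pnom : Ee -> R) (D pL : Ne -> R) (NG : {set Ne})
  (VE : Eh -> R) (VN : Nh -> R) (EG EL : {set Eh}) (hL : Eh -> R)
  (Co m : R) (Qe : Ne -> R) (Qh : Eh -> R)
  (eta : Ee -> R) (omega : Ne -> R) (pG : Ne -> R) (pP : H -> R)
  (hG : Eh -> R) (TE : Eh -> R) (TN : Nh -> R) : Prop :=
  let Tb := Tbar VE VN TE TN in
  (forall l, omega (src l) - omega (dst l) = 0) /\
  (forall j, ~~ isHP j ->
     0 = - pL j + (if j \in NG then pG j else 0) - D j * omega j + netin B pnom eta j) /\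
  (forall k, 0 = - pP k + netin B pnom eta (iH k)) /\
  (forall k, omega (iH k) = m * Tb) /\
  (forall j, 0 = q j * (TN (s j) - TE j) + (if j \in EG then hG j else 0)
                 + hPedge Co pP j - (if j \in EL then hL j else 0)) /\
  (forall n, 0 = \sum_(j | t j == n) q j * (TE j - TN n)) /\
  (forall j, j \in NG -> 0 = - pG j - omega j / Qe j) /\
  (forall j, j \in EG -> 0 = - hG j - Tb / Qh j).

(* decision variables: pG (on NG), hG (on EG), pU (on non-heat-pump buses),
   pP (heat pump electric powers, indexed by heat pumps), hP (their heat outputs) *)
Definition chp_cost (NG : {set Ne}) (EG : {set Eh}) (Co m : R)
  (Qe : Ne -> R) (Qh : Eh -> R) (D : Ne -> R)
  (pG : Ne -> R) (hG : Eh -> R) (pU : Ne -> R) : R :=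
  2^-1 * (\sum_(j in NG) Qe j * pG j ^+ 2)
  + 2^-1 * (\sum_(j in EG) (m / Co) * Qh j * hG j ^+ 2)
  + 2^-1 * (\sum_(j | ~~ isHP j) (D j)^-1 * pU j ^+ 2).

Definition chp_feasible (NG : {set Ne}) (EG EL : {set Eh}) (pL : Ne -> R) (hL : Eh -> R)
  (Co : R) (pG : Ne -> R) (hG : Eh -> R) (pU : Ne -> R) (pP hP : H -> R) : Prop :=
  [/\ \sum_(j in NG) pG j
        = \sum_(j | ~~ isHP j) pL j + \sum_k pP k + \sum_(j | ~~ isHP j) pU j,
      \sum_(j in EG) hG j = \sum_(j in EL) hL j - \sum_k hP k &
      forall k, hP k = Co * pP k].

End CHP.

(* At equilibrium no line carries a frequency difference, so on the connected
   power network all buses share one frequency w, and the heat-pump buses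
   force w = m Tbar.  Summing the bus equations, the line flows cancel; summing
   the edge and node equations of the heat network, the transport terms cancel
   because A_h has zero column sums.  This gives feasibility.  The generation
   controllers make Q_e p^G, (m/C_o) Q_h h^G and Q_u p^U equal to the
   multipliers -w, -m Tbar / C_o and w, which satisfy the stationarity
   condition of the heat pumps; the tangent inequality for convex quadratics
   then gives optimality. *)
From HB Require Import structures.
From mathcomp Require Import all_boot all_order all_algebra.
From mathcomp Require Import all_classical all_reals all_analysis.
From mathcomp Require Import ring lra.
Set Implicit Arguments. Unset Strict Implicit. Unset Printing Implicit Defensive.
Import Order.TTheory GRing.Theory Num.Theory.
Local Open Scope ring_scope.

Lemma sum_fibers (V : nmodType) (I J : finType) (f : I -> J) (F : I -> V) :
  \sum_j \sum_(i | f i == j) F i = \sum_i F i.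
Proof. by rewrite (partition_big f xpredT). Qed.

Lemma connect_eq_fun (T : finType) (U : eqType) (e : rel T) (f : T -> U) :
  (forall x y, e x y -> f x = f y) -> forall a b, connect e a b -> f a = f b.
Proof.
move=> ef a b.
have cl : fingraph.closed e [pred x | f x == f a].
  by move=> x y /ef; rewrite !inE => ->.
by move/(closed_connect cl); rewrite !inE eqxx => /esym/eqP.
Qed.

Section PowerNetwork.
Variables (R : realType) (Ne Ee : finType) (src dst : Ee -> Ne).

Lemma frequency_sync (omega : Ne -> R) :
  power_connected src dst -> (forall l, omega (src l) - omega (dst l) = 0) ->
  exists w, forall j, omega j = w.
Proof.
move=> conn hline.
have padj_eq x y : padj src dst x y -> omega x = omega y.
  by case/existsP=> l /orP[] /andP[/eqP <- /eqP <-]; move/eqP: (hline l);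
    rewrite subr_eq0 => /eqP.
case: (pickP (fun _ : Ne => true)) => [j0 _ | Ne0]; last by exists 0 => j; have := Ne0 j.
by exists (omega j0) => j; rewrite (connect_eq_fun padj_eq (conn j j0)).
Qed.

Lemma sum_netin (B pnom eta : Ee -> R) : \sum_j netin src dst B pnom eta j = 0.
Proof. by rewrite /netin sumrB !sum_fibers subrr. Qed.

Variables (H : finType) (iH : H -> Ne).
Hypothesis iH_inj : injective iH.

Lemma sum_isHP (F : Ne -> R) : \sum_(j | isHP iH j) F j = \sum_k F (iH k).
Proof.
rewrite (eq_bigl (mem (iH @: setT))) => [|j].
  by rewrite big_imset //= => [|x y _ _ /iH_inj //]; apply: eq_bigl => k; rewrite in_setT.
by apply/existsP/imsetP => [[k /eqP <-] | [k _ ->]]; exists k; rewrite ?in_setT.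
Qed.

Lemma power_balance (B pnom eta : Ee -> R) (D pL pG omega : Ne -> R)
    (NG : {set Ne}) (pP : H -> R) :
  (forall j, j \in NG -> ~~ isHP iH j) ->
  (forall j, ~~ isHP iH j -> 0 = - pL j + (if j \in NG then pG j else 0)
                                 - D j * omega j + netin src dst B pnom eta j) ->
  (forall k, 0 = - pP k + netin src dst B pnom eta (iH k)) ->
  \sum_(j in NG) pG j = \sum_(j | ~~ isHP iH j) pL j + \sum_k pP k
                        + \sum_(j | ~~ isHP iH j) D j * omega j.
Proof.
set N := netin src dst B pnom eta; move=> hNG hbus hhp.
have gen : \sum_(j | ~~ isHP iH j) (if j \in NG then pG j else 0) = \sum_(j in NG) pG j.
  rewrite [RHS]big_mkcond [RHS](bigID (isHP iH)) /= [X in _ = X + _]big1 ?add0r // => j hj.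
  by case: ifP => // /hNG; rewrite hj.
have buses : \sum_(j | ~~ isHP iH j) (- pL j + (if j \in NG then pG j else 0)
                                      - D j * omega j + N j) = 0.
  by rewrite big1 // => j /hbus <-.
have pumps : \sum_k pP k = \sum_(j | isHP iH j) N j.
  by rewrite sum_isHP; apply: eq_bigr => k _; have := hhp k; lra.
have := sum_netin B pnom eta; rewrite -/N (bigID (isHP iH)) /= -pumps.
by move: buses; rewrite !big_split /= !sumrN gen; lra.
Qed.

End PowerNetwork.

Section HeatNetwork.
Variables (R : realType) (Nh Eh : finType) (s t : Eh -> Nh) (q : Eh -> R).

Definition mass_conserving : Prop :=
  forall n, \sum_(j | s j == n) q j = \sum_(j | t j == n) q j.

Lemma Ah_colsum0_mass_conserving :
  (forall b, \sum_a Ah s t q a b = 0) -> mass_conserving.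
Proof.
move=> colsum n; move/eqP: (colsum (inr n)).
rewrite big_sumType /= -big_mkcond -big_mkcond big_pred1_eq sumrN addrC subr_eq0.
by move/eqP ->; apply: eq_bigl => j.
Qed.

Lemma sum_flow_src_tgt (g : Nh -> R) :
  mass_conserving ->
  \sum_j q j * g (s j) = \sum_j q j * g (t j).
Proof.
move=> balanced; rewrite -(sum_fibers s) -(sum_fibers t).
apply: eq_bigr => n _.
rewrite (eq_bigr (fun j => q j * g n)) => [|j /eqP -> //].
rewrite [RHS](eq_bigr (fun j => q j * g n)) => [|j /eqP -> //].
by rewrite -!mulr_suml balanced.
Qed.

Lemma sum_hPedge (H : finType) (jH : H -> Eh) (Co : R) (pP : H -> R) :
  \sum_j hPedge jH Co pP j = \sum_k Co * pP k.
Proof. exact: sum_fibers. Qed.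

Lemma heat_balance (H : finType) (jH : H -> Eh) (Co : R) (pP : H -> R)
    (EG EL : {set Eh}) (hG hL TE : Eh -> R) (TN : Nh -> R) :
  (forall b, \sum_a Ah s t q a b = 0) ->
  (forall j, 0 = q j * (TN (s j) - TE j) + (if j \in EG then hG j else 0)
                 + hPedge jH Co pP j - (if j \in EL then hL j else 0)) ->
  (forall n, 0 = \sum_(j | t j == n) q j * (TE j - TN n)) ->
  \sum_(j in EG) hG j = \sum_(j in EL) hL j - \sum_k Co * pP k.
Proof.
move=> colsum hedge hnode.
have nodes : \sum_j q j * TE j - \sum_j q j * TN (t j) = 0.
  rewrite -sumrB -(sum_fibers t) big1 // => n _.
  by rewrite [RHS](hnode n); apply: eq_bigr => j /eqP ->; rewrite mulrBr.
have edges : \sum_j (q j * (TN (s j) - TE j) + (if j \in EG then hG j else 0)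
                   + hPedge jH Co pP j - (if j \in EL then hL j else 0)) = 0.
  by rewrite big1 // => j _; rewrite -hedge.
have transport := sum_flow_src_tgt TN (Ah_colsum0_mass_conserving colsum).
move: edges; rewrite !big_split /= !sumrN -!big_mkcond sum_hPedge.
under eq_bigr do rewrite mulrBr.
rewrite sumrB transport; lra.
Qed.

End HeatNetwork.

Section Optimality.
Variable R : realType.

Lemma half_wsumsq_tangent_le (I : finType) (P : pred I) (a x y : I -> R) (c : R) :
  (forall i, P i -> 0 <= a i) -> (forall i, P i -> a i * x i = c) ->
  2^-1 * (\sum_(i | P i) a i * x i ^+ 2) + c * (\sum_(i | P i) y i - \sum_(i | P i) x i)
  <= 2^-1 * (\sum_(i | P i) a i * y i ^+ 2).
Proof.
move=> a_ge0 grad; rewrite -sumrB !mulr_sumr -big_split /=; apply: ler_sum => i Pi.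
rewrite -(grad i Pi) -subr_ge0.
have -> : 2^-1 * (a i * y i ^+ 2) - (2^-1 * (a i * x i ^+ 2) + a i * x i * (y i - x i))
          = 2^-1 * (a i * (y i - x i) ^+ 2) by field.
by rewrite mulr_ge0 ?invr_ge0 ?ler0n // mulr_ge0 ?a_ge0 ?sqr_ge0.
Qed.

(* [lam] and [mu] are the Lagrange multipliers of the electric and heat
   balance constraints; the last stationarity condition is the one for the
   variable [pP k], which is why it is quantified over [k]. *)
Lemma chp_cost_le_of_stationary (Ne Eh H : finType) (iH : H -> Ne)
    (NG : {set Ne}) (EG EL : {set Eh}) (pL : Ne -> R) (hL : Eh -> R)
    (Co m : R) (Qe : Ne -> R) (Qh : Eh -> R) (D : Ne -> R) (lam mu : R)
    (pG pG' : Ne -> R) (hG hG' : Eh -> R) (pU pU' : Ne -> R) (pP pP' hP hP' : H -> R) :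
  0 <= m -> 0 <= Co ->
  (forall j, j \in NG -> 0 <= Qe j) -> (forall j, j \in EG -> 0 <= Qh j) ->
  (forall j, ~~ isHP iH j -> 0 <= D j) ->
  (forall j, j \in NG -> Qe j * pG j = lam) ->
  (forall j, j \in EG -> m / Co * Qh j * hG j = mu) ->
  (forall j, ~~ isHP iH j -> (D j)^-1 * pU j = - lam) ->
  (forall k : H, lam = Co * mu) ->
  chp_feasible iH NG EG EL pL hL Co pG hG pU pP hP ->
  chp_feasible iH NG EG EL pL hL Co pG' hG' pU' pP' hP' ->
  chp_cost iH NG EG Co m Qe Qh D pG hG pU <= chp_cost iH NG EG Co m Qe Qh D pG' hG' pU'.
Proof.
move=> m_ge0 Co_ge0 Qe_ge0 Qh_ge0 D_ge0 gradG gradH gradU gradP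
  [elec heat hPdef] [elec' heat' hPdef'].
have costG := half_wsumsq_tangent_le pG' Qe_ge0 gradG.
have wH_ge0 j : j \in EG -> 0 <= m / Co * Qh j.
  by move/Qh_ge0; apply: mulr_ge0; apply: divr_ge0.
have wU_ge0 j : ~~ isHP iH j -> 0 <= (D j)^-1 by rewrite invr_ge0; apply: D_ge0.
have costH := half_wsumsq_tangent_le hG' wH_ge0 gradH.
have costU := half_wsumsq_tangent_le pU' wU_ge0 gradU.
have sum_hP (p h : H -> R) : (forall k, h k = Co * p k) -> \sum_k h k = Co * \sum_k p k.
  by move=> hp; rewrite mulr_sumr; apply: eq_bigr => k _.
have pumps : (lam - Co * mu) * (\sum_k pP' k - \sum_k pP k) = 0.
  case: (pickP (fun _ : H => true)) => [k _ | H0]; first by rewrite (gradP k) subrr mul0r.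
  by rewrite !big_pred0 // subrr mulr0.
have multipliers :
    lam * (\sum_(j in NG) pG' j - \sum_(j in NG) pG j)
    + mu * (\sum_(j in EG) hG' j - \sum_(j in EG) hG j)
    + - lam * (\sum_(j | ~~ isHP iH j) pU' j - \sum_(j | ~~ isHP iH j) pU j) = 0.
  by rewrite elec elec' heat heat' (sum_hP _ _ hPdef) (sum_hP _ _ hPdef') -[RHS]pumps; ring.
(* [lra] would misread [gradP : H -> _] as an implication between propositions. *)
rewrite /chp_cost; clear gradP; lra.
Qed.

End Optimality.

Lemma droop_equilibrium (R : realType) (a b x : R) :
  a != 0 -> 0 = - x - b / a -> a * x = - b.
Proof.
move=> a0 e; have -> : x = - (b / a) by lra.
by rewrite mulrN mulrCA divff // mulr1.
Qed.

Theorem theorem2 (R : realType)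
  (Ne Ee : finType) (src dst : Ee -> Ne)
  (H : finType) (iH : H -> Ne)
  (Nh Eh : finType) (s t : Eh -> Nh) (q : Eh -> R) (jH : H -> Eh)
  (B pnom : Ee -> R) (D pL : Ne -> R) (NG : {set Ne})
  (VE : Eh -> R) (VN : Nh -> R) (EG EL : {set Eh}) (hL : Eh -> R)
  (Co m : R) (Qe : Ne -> R) (Qh : Eh -> R)
  (* standing assumptions *)
  (hconn : power_connected src dst)
  (hiH : injective iH) (hjH : injective jH)
  (hNG : forall j, j \in NG -> ~~ isHP iH j)
  (hB : forall l, 0 < B l) (hD : forall j, ~~ isHP iH j -> 0 < D j)
  (hq : forall j, 0 < q j) (hVE : forall j, 0 < VE j) (hVN : forall n, 0 < VN n)
  (hQe : forall j, j \in NG -> 0 < Qe j) (hQh : forall j, j \in EG -> 0 < Qh j)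
  (hm : 0 < m) (hCo : 0 < Co)
  (hAcol : forall b, \sum_a Ah s t q a b = 0)
  (hApsd : forall x : Eh + Nh -> R,
      0 <= \sum_a \sum_b x a * (Ah s t q a b + Ah s t q b a) * x b)
  (hAker : forall x : Eh + Nh -> R,
      \sum_a \sum_b x a * (Ah s t q a b + Ah s t q b a) * x b = 0 ->
      forall a b, x a = x b)
  (* an equilibrium of the closed loop *)
  (eta : Ee -> R) (omega : Ne -> R) (pG : Ne -> R) (pP : H -> R)
  (hG : Eh -> R) (TE : Eh -> R) (TN : Nh -> R)
  (heq : equilibrium src dst iH s t q jH B pnom D pL NG VE VN EG EL hL Co m Qe Qh
           eta omega pG pP hG TE TN) :
  let pU := fun j => D j * omega j in
  let hP := fun k => Co * pP k in
  chp_feasible iH NG EG EL pL hL Co pG hG pU pP hP /\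
  (forall (pG' : Ne -> R) (hG' : Eh -> R) (pU' : Ne -> R) (pP' hP' : H -> R),
     chp_feasible iH NG EG EL pL hL Co pG' hG' pU' pP' hP' ->
     chp_cost iH NG EG Co m Qe Qh D pG hG pU <= chp_cost iH NG EG Co m Qe Qh D pG' hG' pU').
Proof.
move=> pU hP; move: heq; rewrite /equilibrium /=; set Tb := Tbar VE VN TE TN.
case=> [hline [hbus [hhp [hhpT [hedge [hnode [hpG hhG]]]]]]].
have [w hw] := frequency_sync hconn hline.
have elec := power_balance hiH hNG hbus hhp.
have heat := heat_balance hAcol hedge hnode.
have feas : chp_feasible iH NG EG EL pL hL Co pG hG pU pP hP by split.
split=> // pG' hG' pU' pP' hP'.
apply: (chp_cost_le_of_stationary (lam := - w) (mu := m / Co * - Tb)) feas => //.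
- exact: ltW.
- exact: ltW.
- by move=> j /hQe /ltW.
- by move=> j /hQh /ltW.
- by move=> j /hD /ltW.
- by move=> j hj; rewrite -(hw j) (droop_equilibrium _ (hpG j hj)) // lt0r_neq0 ?hQe.
- by move=> j hj; rewrite -mulrA (droop_equilibrium _ (hhG j hj)) // lt0r_neq0 ?hQh.
- by move=> j hj; rewrite mulKf ?lt0r_neq0 ?hD // hw opprK.
- by move=> k; rewrite -(hw (iH k)) hhpT; field; apply: lt0r_neq0.
Qed.
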